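(* Assume Assumptions 1 and 2 for some $\delta>0$. For any distinct $u_1,u_2\in L$, as $n_R\to\infty$, $$\Pr[(u_1,u_2)\in E\mid S_L,S_R]=p_{u_1u_2}-\frac{p_{u_1u_2}^2}{2}+\left(\frac{p_{u_1u_2}}{6}+\frac{M_{R4}}{2n_RM_{R2}^2}\right)p_{u_1u_2}^2\,(1+O(n_R^{-2\delta})),$$ where $p_{u_1u_2}=\frac{M_{R2}}{M_{R1}^2}\cdot\frac{w_{u_1}w_{u_2}}{n_R}$. In particular $p_{u_1u_2}=O(n_R^{-2\delta})=o(1)$, so the projected graph is sparse.
   Context: Model: left nodes $L$ ($|L|=n_L$), right nodes $R$ ($|R|=n_R$), weight sequences $S_L=(w_u)_{u\in L}$, $S_R=(w_v)_{v\in R}$ of positive reals; $M_{Lk}=\frac1{n_L}\sum_{u\in L}w_u^k$, $M_{Rk}=\frac1{n_R}\sum_{v\in R}w_v^k$. The random bipartite graph $G_b=(L\sqcup R,E_b)$ contains each edge $(u,v)$, $u\in L$, $v\in R$, independently with probability $\min\left(\frac{w_uw_v}{n_RM_{R1}},1\right)$. The projected graph is $G=(L,E)$ with $(u,u')\in E$ for distinct $u,u'\in L$ iff there is $z\in R$ with $(u,z),(u',z)\in E_b$ (a single edge regardless of how many such $z$). Assumption 1: $\frac{w_uw_v}{n_RM_{R1}}\le1$ for all $u\in L,v\in R$. Assumption 2 (parameter $\delta>0$), as $n_L,n_R\to\infty$: $\max(S_L\cup S_R)=O(n_R^{1/2-\delta})$, $\min S_L=\Omega(1)$, $M_{R2}=O(M_{R1}^2)$,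 $M_{R4}=O(n_R^{1-2\delta})$. *)

From HB Require Import structures.
From mathcomp Require Import all_boot all_order all_algebra.
From mathcomp Require Import reals exp.
Set Implicit Arguments. Unset Strict Implicit. Unset Printing Implicit Defensive.
Import Order.TTheory GRing.Theory Num.Theory.
Local Open Scope ring_scope.

Section Model.
Variable R : realType.

Definition moment (n : nat) (w : 'I_n -> R) (k : nat) : R :=
  (\sum_(i < n) w i ^+ k) / n%:R.

Definition edge_prob (nL nR : nat) (wL : 'I_nL -> R) (wR : 'I_nR -> R)
  (e : 'I_nL * 'I_nR) : R :=
  Num.min (wL e.1 * wR e.2 / (nR%:R * moment wR 1)) 1.

Definition graph_prob (nL nR : nat) (wL : 'I_nL -> R) (wR : 'I_nR -> R)
  (Eb : {set 'I_nL * 'I_nR}) : R :=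
  \prod_(e : 'I_nL * 'I_nR)
     (if e \in Eb then edge_prob wL wR e else 1 - edge_prob wL wR e).

Definition proj_edge (nL nR : nat) (Eb : {set 'I_nL * 'I_nR}) (u1 u2 : 'I_nL)
  : bool :=
  (u1 != u2) && [exists z : 'I_nR, ((u1, z) \in Eb) && ((u2, z) \in Eb)].

(* Pr[(u1,u2) in E | S_L, S_R] : the weights are fixed, randomness is G_b *)
Definition proj_edge_prob (nL nR : nat) (wL : 'I_nL -> R) (wR : 'I_nR -> R)
  (u1 u2 : 'I_nL) : R :=
  \sum_(Eb : {set 'I_nL * 'I_nR} | proj_edge Eb u1 u2) graph_prob wL wR Eb.

Definition p_pair (nL nR : nat) (wL : 'I_nL -> R) (wR : 'I_nR -> R)
  (u1 u2 : 'I_nL) : R :=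
  moment wR 2 / moment wR 1 ^+ 2 * (wL u1 * wL u2 / nR%:R).

End Model.

Definition eventually (P : nat -> Prop) : Prop := exists K, forall k, (K <= k)%N -> P k.
Definition nat_to_infty (n : nat -> nat) : Prop :=
  forall N, eventually (fun k => (N <= n k)%N).

From HB Require Import structures.
From mathcomp Require Import all_boot all_order all_algebra.
From mathcomp Require Import reals exp.
From mathcomp Require Import ring lra.
Set Implicit Arguments. Unset Strict Implicit. Unset Printing Implicit Defensive.
Import Order.TTheory GRing.Theory Num.Theory.
Local Open Scope ring_scope.

(* Fix the weights and write q(u,z) for the probability of the bipartite edge
   (u,z).  The left nodes u1 != u2 are adjacent in G iff some right node z is
   adjacent to both, so by independence of the edges
       Pr[(u1,u2) in E] = 1 - prod_z (1 - x_z),   x_z = q(u1,z) q(u2,z)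
   (proj_edge_weight).  Since the probability is an explicit sum over edge
   sets, we prove this by expanding the indicator prod_z (1 - [both edges]) as
   a sum over sets S of right nodes and factorising each term over the edges.
   For x_z in [0,1], prod_z (1 - x_z) is bracketed by the Bonferroni
   truncations of its expansion, expressed through the power sums a, b, c of
   the x_z (bonferroni); the third-order truncation leaves a relative error at
   most 2a (truncation_error).  Under Assumption 1, x_z = w_u1 w_u2 w_z^2 /
   (n_R M_R1)^2, so a = p_u1u2 and b/2 is the M_R4 term (fixed_size_expansion).
   Finally p_u1u2 = O(n_R^(-2 delta)) by the bounds on max S_L and on M_R2
   (p_pair_bound), which yields both claims. *)

Section TruncatedProduct.
Variable R : realFieldType.

(* Second and third elementary symmetric polynomials of a family, written with
   its power sums a = p1, b = p2, c = p3 (Newton's identities). *)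
Definition elem2 (a b : R) : R := (a ^+ 2 - b) / 2.
Definition elem3 (a b c : R) : R := (a ^+ 3 - 3 * a * b + 2 * c) / 6.

(* Invariant satisfied by the power sums a, b, c of a family in [0,1] and the
   product P of the (1 - x_i): the Bonferroni bounds up to order four, together
   with the positivity facts that make them propagate. *)
Definition bonferroni_bounds (a b c P : R) : Prop :=
  [/\ 0 <= P <= 1, 0 <= a, 0 <= b, 0 <= c <= a * b &
   [/\ 1 - a <= P, P <= 1 - a + elem2 a b,
       1 - a + elem2 a b - elem3 a b c <= P &
       P <= 1 - a + elem2 a b - elem3 a b c + a ^+ 4 / 24]].

Lemma bonferroni_bounds_step (a b c P x : R) : 0 <= x <= 1 ->
  bonferroni_bounds a b c P ->
  bonferroni_bounds (x + a) (x ^+ 2 + b) (x ^+ 3 + c) ((1 - x) * P).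
Proof.
move=> /andP[x0 x1] [/andP[P0 P1] a0 b0 /andP[c0 cab] [B1 B2 B3 B4]].
rewrite /bonferroni_bounds /elem2 /elem3 in B2 B3 B4 *.
have x2 : 0 <= x ^+ 2 by rewrite exprn_ge0.
have x3 : 0 <= x ^+ 3 by rewrite exprn_ge0.
have xP1 : x * P <= x by rewrite -[leRHS]mulr1 ler_wpM2l.
have xb : 0 <= x * b by rewrite mulr_ge0.
have ax2 : 0 <= a * x ^+ 2 by rewrite mulr_ge0.
have e3_le : a ^+ 3 - 3 * a * b + 2 * c <= a ^+ 3 by nra.
have quartic : 4 * a ^+ 3 * x <= (x + a) ^+ 4 - a ^+ 4.
  have : 0 <= x * (6 * a ^+ 2 * x + 4 * a * x ^+ 2 + x ^+ 3).
    by apply: mulr_ge0 => //; nra.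
  by move=> h; nra.
have xB1 : 0 <= x * (P - (1 - a)) by apply: mulr_ge0; lra.
have xB2 : 0 <= x * (1 - a + (a ^+ 2 - b) / 2 - P) by apply: mulr_ge0; lra.
have xB3 : 0 <= x * (P - (1 - a + (a ^+ 2 - b) / 2
                            - (a ^+ 3 - 3 * a * b + 2 * c) / 6)).
  by apply: mulr_ge0; lra.
have xe3 : x * (a ^+ 3 - 3 * a * b + 2 * c) <= x * a ^+ 3 by rewrite ler_wpM2l.
have xP0 : 0 <= (1 - x) * P by apply: mulr_ge0; lra.
split; [apply/andP; split; nra | lra | lra | apply/andP; split; nra | split; nra].
Qed.

Lemma bonferroni (I : Type) (r : seq I) (x : I -> R) :
  (forall i, 0 <= x i <= 1) ->
  bonferroni_bounds (\sum_(i <- r) x i) (\sum_(i <- r) x i ^+ 2)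
    (\sum_(i <- r) x i ^+ 3) (\prod_(i <- r) (1 - x i)).
Proof.
move=> x01; elim: r => [|i r IH].
  rewrite !big_nil /bonferroni_bounds /elem2 /elem3.
  split; [by rewrite ler01 lexx | by [] | by [] | by rewrite mul0r lexx | ].
  by split; lra.
by rewrite !big_cons; apply: bonferroni_bounds_step.
Qed.

(* Third-order truncation: 1 - P = a - a^2/2 + (a^3/6 + b/2) up to a relative
   error 2a, because the neglected terms are -ab/2 + c/3 with c <= ab, and a
   fourth-order term at most a^4/24. *)
Lemma truncation_error (a b c P : R) :
  bonferroni_bounds a b c P ->
  `|(1 - P) - (a - a ^+ 2 / 2) - (a ^+ 3 / 6 + b / 2)|
    <= 2 * a * (a ^+ 3 / 6 + b / 2).
Proof.
move=> [_ a0 b0 /andP[c0 cab] [_ _ lower upper]].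
rewrite /elem2 /elem3 in lower upper.
have a3 : 0 <= a ^+ 3 by rewrite exprn_ge0.
have ab : 0 <= a * b by rewrite mulr_ge0.
have a4 : a ^+ 4 = a * a ^+ 3 by rewrite exprS.
by rewrite ler_norml; apply/andP; split; nra.
Qed.
End TruncatedProduct.

Section ProductWeights.
Variable R : comPzRingType.

Lemma sum_subsets_prod {T : finType} (F : T -> bool -> R) :
  \sum_(A : {set T}) \prod_(e : T) F e (e \in A) =
  \prod_(e : T) (F e true + F e false).
Proof.
rewrite (bigA_distr _ _ (fun e => F e true) (fun e => F e false)).
by apply: eq_bigr => A _; apply: eq_bigr => e _; case: (e \in A).
Qed.

Lemma prod_one_sub_expand {T : finType} (t : T -> R) :
  \prod_(z : T) (1 - t z) =
  \sum_(S : {set T}) \prod_(z : T) (if z \in S then - t z else 1).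
Proof.
rewrite -(bigA_distr _ _ (fun z => - t z) (fun z => 1)).
by apply: eq_bigr => z _; rewrite addrC.
Qed.

Lemma prod_on_pair (n : nat) (u1 u2 : 'I_n) (h : 'I_n -> R) : u1 != u2 ->
  (forall u, u != u1 -> u != u2 -> h u = 1) -> \prod_u h u = h u1 * h u2.
Proof.
move=> ne hh; rewrite (bigD1 u1) //= (bigD1 u2) /=; last by rewrite eq_sym.
by rewrite big1 ?mulr1 // => u /andP[h1 h2]; apply: hh.
Qed.

Lemma prod_by_columns (nL nR : nat) (G : 'I_nL * 'I_nR -> R) :
  \prod_e G e = \prod_(z : 'I_nR) \prod_(u : 'I_nL) G (u, z).
Proof. by rewrite exchange_big pair_bigA; apply: eq_bigr => -[]. Qed.

Variables (nL nR : nat) (q : 'I_nL * 'I_nR -> R) (u1 u2 : 'I_nL).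
Hypothesis u1_neq_u2 : u1 != u2.

(* Weight of the edge set A when each edge e is present independently with
   "probability" q e; the identities below are polynomial in q. *)
Definition edge_set_weight (A : {set 'I_nL * 'I_nR}) : R :=
  \prod_e (if e \in A then q e else 1 - q e).

Definition common_nbr (A : {set 'I_nL * 'I_nR}) (z : 'I_nR) : R :=
  ((u1, z) \in A)%:R * ((u2, z) \in A)%:R.

(* Edgewise factorisation of prod_(z in S) (- common_nbr A z): the sign is
   carried by the edges at u1, the other edge at z only contributes its
   indicator. *)
Definition sign_factor (S : {set 'I_nR}) (e : 'I_nL * 'I_nR) (b : bool) : R :=
  if e.2 \in S then
    (if e.1 == u1 then - b%:R else if e.1 == u2 then b%:R else 1)
  else 1.

Lemma total_weight : \sum_A edge_set_weight A = 1.
Proof.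
rewrite /edge_set_weight (sum_subsets_prod (fun e b => if b then q e else 1 - q e)).
by rewrite big1 // => e _; rewrite addrC subrK.
Qed.

Lemma common_nbr_prod_factor (S : {set 'I_nR}) (A : {set 'I_nL * 'I_nR}) :
  \prod_z (if z \in S then - common_nbr A z else 1) =
  \prod_e sign_factor S e (e \in A).
Proof.
have u21 : (u2 == u1) = false by rewrite eq_sym (negbTE u1_neq_u2).
rewrite prod_by_columns; apply: eq_bigr => z _.
rewrite (@prod_on_pair _ u1 u2 (fun u => sign_factor S (u, z) ((u, z) \in A))) //.
- rewrite /sign_factor /=; case: (z \in S); last by rewrite mulr1.
  by rewrite !eqxx u21 /common_nbr; ring.
- by move=> u h1 h2; rewrite /sign_factor /= (negbTE h1) (negbTE h2); case: ifP.
Qed.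

Lemma expected_common_nbr_prod (S : {set 'I_nR}) :
  \sum_A edge_set_weight A * \prod_z (if z \in S then - common_nbr A z else 1) =
  \prod_z (if z \in S then - (q (u1, z) * q (u2, z)) else 1).
Proof.
have u21 : (u2 == u1) = false by rewrite eq_sym (negbTE u1_neq_u2).
pose F e b := (if b then q e else 1 - q e) * sign_factor S e b.
transitivity (\sum_(A : {set 'I_nL * 'I_nR}) \prod_e F e (e \in A)).
  by apply: eq_bigr => A _; rewrite common_nbr_prod_factor -big_split.
rewrite sum_subsets_prod prod_by_columns; apply: eq_bigr => z _.
rewrite (@prod_on_pair _ u1 u2 (fun u => F (u, z) true + F (u, z) false)) //.
- rewrite /F /sign_factor /=; case: (z \in S); last by ring.
  by rewrite !eqxx u21; ring.
- move=> u h1 h2; rewrite /F /sign_factor /= (negbTE h1) (negbTE h2).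
  by case: (z \in S); ring.
Qed.

Lemma no_common_nbr_indicator (A : {set 'I_nL * 'I_nR}) :
  \prod_z (1 - common_nbr A z) = (~~ proj_edge A u1 u2)%:R.
Proof.
rewrite /proj_edge u1_neq_u2 /=; case: existsP => [[z /andP[h1 h2]]|hn] /=.
  by rewrite (bigD1 z) //= /common_nbr h1 h2 /= mulr1 subrr mul0r.
rewrite big1 // => z _; rewrite /common_nbr.
case h1: ((u1, z) \in A); case h2: ((u2, z) \in A); rewrite ?mul0r ?mulr0 ?subr0 //.
by case: hn; exists z; rewrite h1 h2.
Qed.

Lemma proj_edge_weight :
  \sum_(A : {set 'I_nL * 'I_nR} | proj_edge A u1 u2) edge_set_weight A =
  1 - \prod_z (1 - q (u1, z) * q (u2, z)).
Proof.
have no_edge : \sum_(A | ~~ proj_edge A u1 u2) edge_set_weight A =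
               \prod_z (1 - q (u1, z) * q (u2, z)).
  transitivity (\sum_(A : {set 'I_nL * 'I_nR})
                  edge_set_weight A * \prod_z (1 - common_nbr A z)).
    rewrite big_mkcond; apply: eq_bigr => A _.
    by rewrite no_common_nbr_indicator; case: ifP; rewrite ?mulr1 ?mulr0.
  transitivity (\sum_(A : {set 'I_nL * 'I_nR}) \sum_(S : {set 'I_nR})
      edge_set_weight A * \prod_z (if z \in S then - common_nbr A z else 1)).
    by apply: eq_bigr => A _; rewrite prod_one_sub_expand mulr_sumr.
  rewrite exchange_big (prod_one_sub_expand (fun z => q (u1, z) * q (u2, z))).
  by apply: eq_bigr => S _; apply: expected_common_nbr_prod.
rewrite -no_edge -total_weight.
by rewrite [X in _ = X - _](bigID (fun A => proj_edge A u1 u2)) addrK.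
Qed.
End ProductWeights.

(* x^a squared over x, as a power of x; turns n^(1/2 - delta) into n^(-delta). *)
Lemma powR_sqr_div (R : realType) (x a : R) : 0 < x ->
  powR x a ^+ 2 / x = powR x (2 * a - 1).
Proof.
move=> x0; have x_ne0 (b : bool) : b ==> (x != 0) by rewrite (gt_eqF x0) implybT.
rewrite powRB // powRr1 ?ltW // expr2 -powRD //.
by congr (powR x _ / _); ring.
Qed.

Definition cubic_correction (R : realType) (nl n : nat)
  (wl : 'I_nl -> R) (wr : 'I_n -> R) (v1 v2 : 'I_nl) : R :=
  let p := p_pair wl wr v1 v2 in
  (p / 6 + moment wr 4 / (2 * n%:R * moment wr 2 ^+ 2)) * p ^+ 2.

Section FixedSize.
Variable R : realType.
Variables (nl n : nat) (wl : 'I_nl -> R) (wr : 'I_n -> R) (v1 v2 : 'I_nl).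
Hypothesis n_gt0 : (0 < n)%N.
Hypothesis wl_gt0 : forall u, 0 < wl u.
Hypothesis wr_gt0 : forall z, 0 < wr z.

Lemma sum_pow_moment (k : nat) : \sum_z wr z ^+ k = n%:R * moment wr k.
Proof. by rewrite /moment mulrC divfK // pnatr_eq0 -lt0n. Qed.

Lemma moment_gt0 (k : nat) : 0 < moment wr k.
Proof.
rewrite /moment divr_gt0 ?ltr0n // (bigD1 (Ordinal n_gt0)) //=.
rewrite ltr_pwDl ?exprn_gt0 //.
by apply: sumr_ge0 => i _; rewrite exprn_ge0 // ltW.
Qed.

Lemma edge_prob_in01 e : 0 <= edge_prob wl wr e <= 1.
Proof.
rewrite /edge_prob ge_min lexx orbT andbT le_min ler01 andbT.
by apply/ltW/divr_gt0; apply: mulr_gt0; rewrite ?ltr0n ?moment_gt0.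
Qed.

(* p_v1v2 and the cubic correction are nonnegative, so the relative error
   bound can be stated with |B| = B. *)
Lemma p_pair_ge0 : 0 <= p_pair wl wr v1 v2.
Proof.
apply: mulr_ge0; first exact: ltW (divr_gt0 (moment_gt0 2) (exprn_gt0 2 (moment_gt0 1))).
by rewrite divr_ge0 ?ler0n // mulr_ge0 // ltW.
Qed.

Lemma cubic_correction_ge0 : 0 <= cubic_correction wl wr v1 v2.
Proof.
have n0 : 0 < n%:R :> R by rewrite ltr0n.
have M4_ratio : 0 <= moment wr 4 / (2 * n%:R * moment wr 2 ^+ 2).
  apply/ltW/(divr_gt0 (moment_gt0 4)).
  exact: mulr_gt0 (mulr_gt0 (ltr0Sn R 1) n0) (exprn_gt0 2 (moment_gt0 2)).
have p0 := p_pair_ge0.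
exact: mulr_ge0 (addr_ge0 (divr_ge0 p0 (ler0n _ 6)) M4_ratio) (exprn_ge0 2 p0).
Qed.

Lemma p_pair_bound (delta CL C2 : R) :
  (forall u, wl u <= CL * powR n%:R (2^-1 - delta)) ->
  moment wr 2 <= C2 * moment wr 1 ^+ 2 ->
  p_pair wl wr v1 v2 <= CL ^+ 2 * C2 * powR n%:R (- (2 * delta)).
Proof.
move=> wl_le M2_le; set s := powR n%:R (2^-1 - delta).
have n0 : 0 < n%:R :> R by rewrite ltr0n.
have M1 := moment_gt0 1; have M2 := moment_gt0 2.
have ratio_le : moment wr 2 / moment wr 1 ^+ 2 <= C2.
  by rewrite ler_pdivrMr ?exprn_gt0.
have C2_ge0 : 0 <= C2.
  by apply: le_trans ratio_le; exact: ltW (divr_gt0 M2 (exprn_gt0 2 M1)).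
have ww_le : wl v1 * wl v2 <= (CL * s) ^+ 2.
  by rewrite expr2 ler_pM ?wl_le // ltW.
have ww_ge0 : 0 <= wl v1 * wl v2 / n%:R by rewrite divr_ge0 ?ler0n // mulr_ge0 // ltW.
have -> : powR n%:R (- (2 * delta)) = s ^+ 2 / n%:R.
  by rewrite powR_sqr_div //; congr (powR _ _); field.
rewrite /p_pair (le_trans (ler_wpM2r ww_ge0 ratio_le)) //.
rewrite (_ : CL ^+ 2 * C2 * (s ^+ 2 / n%:R) = C2 * ((CL * s) ^+ 2 / n%:R)); last by ring.
by rewrite ler_wpM2l // ler_pM2r ?invr_gt0.
Qed.

Hypothesis assumption1 : forall u z, wl u * wr z / (n%:R * moment wr 1) <= 1.
Hypothesis v1_neq_v2 : v1 != v2.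

Lemma fixed_size_expansion :
  let p := p_pair wl wr v1 v2 in
  `|proj_edge_prob wl wr v1 v2 - (p - p ^+ 2 / 2) - cubic_correction wl wr v1 v2|
    <= 2 * p * cubic_correction wl wr v1 v2.
Proof.
rewrite /=; set p := p_pair wl wr v1 v2.
set B := cubic_correction wl wr v1 v2.
pose x z := edge_prob wl wr (v1, z) * edge_prob wl wr (v2, z).
pose K := wl v1 * wl v2 / (n%:R * moment wr 1) ^+ 2.
have x01 z : 0 <= x z <= 1.
  have /andP[a0 a1] := edge_prob_in01 (v1, z).
  have /andP[b0 b1] := edge_prob_in01 (v2, z).
  by rewrite mulr_ge0 //= -[1](mulr1 1) ler_pM.
have n0 : n%:R != 0 :> R by rewrite pnatr_eq0 -lt0n.
have M1 := moment_gt0 1; have M2 := moment_gt0 2.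
(* Assumption 1 removes the truncation at 1 in the edge probabilities. *)
have xE z : x z = K * wr z ^+ 2.
  rewrite /x /edge_prob !min_l ?assumption1 //= /K.
  by field; rewrite n0 gt_eqF.
have sum_x : \sum_z x z = p.
  under eq_bigr do rewrite xE; rewrite -mulr_sumr sum_pow_moment /p /p_pair /K.
  by field; rewrite n0 !gt_eqF.
have sum_x2 : \sum_z x z ^+ 2
              = 2 * (moment wr 4 / (2 * n%:R * moment wr 2 ^+ 2) * p ^+ 2).
  under eq_bigr do rewrite xE exprMn -exprM; rewrite -mulr_sumr sum_pow_moment.
  by rewrite /p /p_pair /K; field; rewrite n0 !gt_eqF.
have BE : p ^+ 3 / 6 + 2 * (moment wr 4 / (2 * n%:R * moment wr 2 ^+ 2) * p ^+ 2) / 2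
          = B.
  by rewrite /B /cubic_correction -/p; clearbody p; field; rewrite n0 gt_eqF.
have := truncation_error (bonferroni (index_enum _) x01).
by rewrite sum_x sum_x2 BE -(proj_edge_weight _ v1_neq_v2).
Qed.
End FixedSize.

Lemma eventually_and (P Q : nat -> Prop) :
  eventually P -> eventually Q -> eventually (fun k => P k /\ Q k).
Proof.
move=> [KP hP] [KQ hQ]; exists (maxn KP KQ) => k.
by rewrite geq_max => /andP[/hP ? /hQ ?].
Qed.

Theorem mainTheorem4 (R : realType) (delta : R) (hdelta : 0 < delta)
  (nL nR : nat -> nat)
  (wL : forall k, 'I_(nL k) -> R) (wR : forall k, 'I_(nR k) -> R)
  (u1 u2 : forall k, 'I_(nL k))
  (hnL : nat_to_infty nL) (hnR : nat_to_infty nR)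
  (hwL_pos : forall k u, 0 < wL k u) (hwR_pos : forall k v, 0 < wR k v)
  (* Assumption 1 *)
  (hA1 : forall k u v,
     wL k u * wR k v / ((nR k)%:R * moment (wR k) 1) <= 1)
  (* Assumption 2 *)
  (hmaxL : exists C : R, eventually (fun k =>
     forall u, wL k u <= C * powR (nR k)%:R (2^-1 - delta)))
  (hmaxR : exists C : R, eventually (fun k =>
     forall v, wR k v <= C * powR (nR k)%:R (2^-1 - delta)))
  (hminL : exists c : R, 0 < c /\ eventually (fun k => forall u, c <= wL k u))
  (hM2 : exists C : R, eventually (fun k =>
     moment (wR k) 2 <= C * moment (wR k) 1 ^+ 2))
  (hM4 : exists C : R, eventually (fun k =>
     moment (wR k) 4 <= C * powR (nR k)%:R (1 - 2 * delta)))
  (hdist : forall k, u1 k != u2 k) :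
  let p k := p_pair (wL k) (wR k) (u1 k) (u2 k) in
  let B k := (p k / 6 + moment (wR k) 4 /
                 (2 * (nR k)%:R * moment (wR k) 2 ^+ 2)) * p k ^+ 2 in
  (exists C : R, eventually (fun k =>
     `| proj_edge_prob (wL k) (wR k) (u1 k) (u2 k)
        - (p k - p k ^+ 2 / 2) - B k |
       <= C * powR (nR k)%:R (- (2 * delta)) * `| B k |))
  /\ (exists C : R, eventually (fun k =>
     p k <= C * powR (nR k)%:R (- (2 * delta)))).
Proof.
move=> p B.
case: hmaxL => CL evL; case: hM2 => C2 ev2.
have [K hK] := eventually_and (hnR 1) (eventually_and evL ev2).
have bounds k : (K <= k)%N ->
  [/\ 0 <= B k, p k <= CL ^+ 2 * C2 * powR (nR k)%:R (- (2 * delta)) &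
      `|proj_edge_prob (wL k) (wR k) (u1 k) (u2 k) - (p k - p k ^+ 2 / 2) - B k|
        <= 2 * p k * B k].
  move=> /hK [n_gt0 [wL_le M2_le]]; split.
  - exact: cubic_correction_ge0.
  - exact: p_pair_bound.
  - exact: fixed_size_expansion.
split; last by exists (CL ^+ 2 * C2), K => k /bounds [].
exists (2 * (CL ^+ 2 * C2)), K => k /bounds [B_ge0 p_le err].
rewrite [`|B k|]ger0_norm //; apply: le_trans err _.
by rewrite ler_wpM2r // -mulrA ler_wpM2l.
Qed.
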